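(* Let $(E,\mathcal{E},\nu)$ be a $\sigma$-finite measure space, $\phi$ a Young function satisfying the $\Delta_2$-condition, $w$ a weight function, and $\Psi:E\to E$ a non-singular measurable transformation such that the composition operator $C_\Psi f=f\circ\Psi$ is a bounded linear operator on the Orlicz-Lorentz space $L_{(\phi,w)}$. If $\Psi$ is pre-positive, then $\mathcal{A}(C_\Psi)<\infty$.
   Context: A Young function is a convex $\phi:[0,\infty)\to[0,\infty)$ with $\phi(x)=0\iff x=0$ and $\lim_{x\to\infty}\phi(x)=\infty$; $\Delta_2$-condition: $\phi(2x)\le k\phi(x)$ for some $k>0$ and all $x>0$. A weight function is a non-increasing locally integrable $w:(0,\infty)\to(0,\infty)$ with $\int_0^\infty w=\infty$. For measurable $f$, $\nu_f(s)=\nu\{|f|>s\}$, $f^*(t)=\inf\{s>0:\nu_f(s)\le t\}$; $L_{(\phi,w)}$ is the space of measurable $f:E\to\mathbb{C}$ with $\int_0^\infty\phi(\alpha f^*(t))w(t)\,dt<\infty$ for some $\alpha>0$, with the Luxemburg norm. $\Psi$ non-singular: $\nu(\Psi^{-1}(S))=0$ whenever $\nu(S)=0$. $\Psi$ is pre-positive if $\nu(\Psi^{-1}(A))>0$ whenever $\nu(A)>0$. The ascent $\mathcal{A}(T)$ is the smallest integer $m$ with $\mathcal{N}(T^m)=\mathcal{N}(T^{m+1})$ ($\mathcal{N}$ = kernel), and $\infty$ if no such $m$ exists. *)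

From HB Require Import structures.
From mathcomp Require Import all_boot all_order all_algebra.
From mathcomp Require Import all_classical all_reals all_analysis.
From mathcomp Require Import complex.
Set Implicit Arguments. Unset Strict Implicit. Unset Printing Implicit Defensive.
Import Order.TTheory GRing.Theory Num.Theory.
Local Open Scope classical_set_scope.
Local Open Scope ring_scope.

Section OrliczLorentz.
Context {R : realType}.

Definition young_function (phi : R -> R) : Prop :=
  [/\ (forall x, 0 <= x -> 0 <= phi x),
      (forall x y t, 0 <= x -> 0 <= y -> 0 <= t <= 1 ->
          phi (t * x + (1 - t) * y) <= t * phi x + (1 - t) * phi y),
      (forall x, 0 <= x -> (phi x = 0 <-> x = 0)) &
      (forall M : R, exists x0 : R, forall x, x0 < x -> M < phi x)].

Definition delta2 (phi : R -> R) : Prop :=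
  exists k : R, 0 < k /\ forall x, 0 < x -> phi (2 * x) <= k * phi x.

Definition weight_function (w : R -> R) : Prop :=
  [/\ (forall t, 0 < t -> 0 < w t),
      (forall s t, 0 < s -> s <= t -> w t <= w s),
      locally_integrable (R := R) `]0%R, +oo[ w &
      (\int[lebesgue_measure]_(t in `]0%R, +oo[) (w t)%:E = +oo)%E].

Definition phibar (phi : R -> R) (x : \bar R) : \bar R :=
  match x with
  | EFin r => (phi r)%:E
  | +oo%E => +oo%E
  | -oo%E => 0%E
  end.

Context {d : measure_display} {T : measurableType d}.
Variable mu : {measure set T -> \bar R}.

Definition cmeasurable (f : T -> R[i]) : Prop :=
  measurable_fun setT (fun x => complex.Re (f x)) /\ measurable_fun setT (fun x => complex.Im (f x)).

Definition distrib (f : T -> R[i]) (s : R) : \bar R :=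
  mu [set x | s < Normc.normc (f x)].

Definition rearr (f : T -> R[i]) (t : R) : \bar R :=
  ereal_inf [set s%:E | s in [set s : R | 0 < s /\ (distrib f s <= t%:E)%E]].

Definition modular (phi w : R -> R) (f : T -> R[i]) (alpha : R) : \bar R :=
  (\int[lebesgue_measure]_(t in `]0%R, +oo[)
      (phibar phi (alpha%:E * rearr f t) * (w t)%:E))%E.

Definition inOL (phi w : R -> R) (f : T -> R[i]) : Prop :=
  cmeasurable f /\ exists alpha : R, 0 < alpha /\ (modular phi w f alpha < +oo)%E.

Definition lux_norm (phi w : R -> R) (f : T -> R[i]) : \bar R :=
  ereal_inf [set lam%:E | lam in
     [set lam : R | 0 < lam /\ (modular phi w f lam^-1 <= 1)%E]].

Definition non_singular (Psi : T -> T) : Prop :=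
  forall S, measurable S -> mu S = 0%E -> mu (Psi @^-1` S) = 0%E.

Definition pre_positive (Psi : T -> T) : Prop :=
  forall A, measurable A -> (0 < mu A)%E -> (0 < mu (Psi @^-1` A))%E.

Definition comp_bounded (phi w : R -> R) (Psi : T -> T) : Prop :=
  exists K : R, 0 <= K /\ forall f, inOL phi w f ->
    inOL phi w (f \o Psi) /\ (lux_norm phi w (f \o Psi) <= K%:E * lux_norm phi w f)%E.

(* kernel of (C_Psi)^m on L_(phi,w): (C_Psi)^m f = f \o Psi^m, and f is in the
   kernel iff (C_Psi)^m f = 0 as an element of L_(phi,w), i.e. nu-a.e. *)
Definition kernel_pow (phi w : R -> R) (Psi : T -> T) (m : nat) : set (T -> R[i]) :=
  [set f | inOL phi w f /\ {ae mu, forall x, f (iter m Psi x) = 0}].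

Definition finite_ascent (phi w : R -> R) (Psi : T -> T) : Prop :=
  exists m : nat, kernel_pow phi w Psi m = kernel_pow phi w Psi m.+1.

End OrliczLorentz.

From HB Require Import structures.
From mathcomp Require Import all_boot all_order all_algebra.
From mathcomp Require Import all_classical all_reals all_analysis.
From mathcomp Require Import complex.
Set Implicit Arguments. Unset Strict Implicit. Unset Printing Implicit Defensive.
Import Order.TTheory GRing.Theory Num.Theory.
Local Open Scope classical_set_scope.
Local Open Scope ring_scope.

(* The ascent is in fact 0: a non-singular Psi makes C_Psi well defined on
   a.e.-classes, and pre-positivity makes it injective, since f o Psi = 0 a.e.
   means that Psi^-1 {f <> 0} is null, hence so is {f <> 0}. Neither the
   Orlicz-Lorentz structure nor the boundedness of C_Psi plays any role. *)

Section preimage_null_sets.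
Context {R : realType} {d : measure_display} {T : measurableType d}.
Variables (mu : {measure set T -> \bar R}) (Psi : T -> T).
Hypothesis mPsi : measurable_fun setT Psi.

Lemma measurable_preimage (A : set T) : measurable A -> measurable (Psi @^-1` A).
Proof. by move=> mA; rewrite -[_ @^-1` _]setTI; exact: mPsi. Qed.

Lemma ae_comp_non_singular (P : T -> Prop) : non_singular mu Psi ->
  {ae mu, forall x, P x} -> {ae mu, forall x, P (Psi x)}.
Proof.
move=> nsPsi [N [mN N0 notPN]]; exists (Psi @^-1` N); split.
- exact: measurable_preimage.
- exact: nsPsi.
- by move=> x /notPN.
Qed.

Lemma pre_positive_null (A : set T) : pre_positive mu Psi -> measurable A ->
  mu (Psi @^-1` A) = 0%E -> mu A = 0%E.
Proof.
move=> ppPsi mA PsiA0; apply/eqP; rewrite -measure_le0 leNgt.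
by apply/negP => /(ppPsi _ mA); rewrite PsiA0 ltxx.
Qed.

Lemma ae_of_ae_comp_pre_positive (P : T -> Prop) : pre_positive mu Psi ->
  measurable [set x | ~ P x] ->
  {ae mu, forall x, P (Psi x)} -> {ae mu, forall x, P x}.
Proof.
move=> ppPsi mnotP aePPsi; apply/negligibleP => //.
apply: (pre_positive_null ppPsi mnotP).
by apply/negligibleP => //; exact: measurable_preimage.
Qed.

End preimage_null_sets.

Lemma cmeasurable_support {R : realType} {d : measure_display}
    {T : measurableType d} (f : T -> R[i]) :
  cmeasurable f -> measurable [set x | f x != 0].
Proof.
move=> [mRe mIm].
have -> : [set x | f x != 0] =
    (fun x => complex.Re (f x)) @^-1` [set~ 0] `|`
    (fun x => complex.Im (f x)) @^-1` [set~ 0].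
  apply/seteqP; split => x /=; rewrite eq_complex negb_and.
    by case/orP => /eqP; [left|right].
  by case => /eqP nz; rewrite /= nz ?orbT.
have mnz : measurable [set~ (0 : R)] by exact: measurableC.
by apply: measurableU; rewrite -[_ @^-1` _]setTI;
  [exact: (mRe measurableT _ mnz) | exact: (mIm measurableT _ mnz)].
Qed.

Theorem theorem3p6 (R : realType) (d : measure_display) (T : measurableType d)
  (mu : {measure set T -> \bar R}) (phi w : R -> R) (Psi : T -> T) :
  sigma_finite setT mu ->
  young_function phi -> delta2 phi -> weight_function w ->
  measurable_fun setT Psi -> non_singular mu Psi ->
  comp_bounded mu phi w Psi ->
  pre_positive mu Psi ->
  finite_ascent mu phi w Psi.
Proof.
move=> _ _ _ _ mPsi nsPsi _ ppPsi; exists 0%N.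
apply/seteqP; split => f [fOL aef]; split => //=.
- exact: (ae_comp_non_singular mPsi nsPsi aef).
- apply: (ae_of_ae_comp_pre_positive mPsi ppPsi _ aef).
  have := cmeasurable_support fOL.1; congr measurable.
  by apply/seteqP; split => x /= /eqP.
Qed.
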